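(* Let $n, m, k, l, s, t, i$ be positive integers with $\min\{m,n\}\geq (t+1)(k-t+1)$, $k\geq l> t\geq 3$, $i+2\leq s \leq i+k-t$ and $t+2 \leq i\leq k$. Then \[\frac{(m-l+t-i)(n-s-k+i)\,S(n,s,i,k)\,S(m,s,s+t-i,l)}{(m-s+1)(n-s+1)\,T(n,s,i,k)\,T(m,s,s+t-i,l)}>1,\] where for positive integers $n,s,i,j$, \[S(n,s,i,j)=s(n-s+1)-i(j-i),\qquad T(n,s,i,j)=i(n-j-s+i+1)+(s-i)(j-i+1).\] *)

From mathcomp Require Import all_boot all_order all_algebra.
Set Implicit Arguments. Unset Strict Implicit. Unset Printing Implicit Defensive.
Import Order.TTheory GRing.Theory Num.Theory.
Local Open Scope ring_scope.

Definition Sf (n s i j : nat) : rat :=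
  s%:Q * (n%:Q - s%:Q + 1) - i%:Q * (j%:Q - i%:Q).

Definition Tf (n s i j : nat) : rat :=
  i%:Q * (n%:Q - j%:Q - s%:Q + i%:Q + 1) + (s%:Q - i%:Q) * (j%:Q - i%:Q + 1).

(* Write every variable as its lower bound plus a nonnegative offset:
   t = a + 3, i = t + 2 + b + e1, s = i + 2 + e1 + e2, k = i + c + e2,
   l = k - r and n, m = (t + 1)(k - t + 1) + f, g.  The denominator factors are
   then positive, and numerator minus denominator becomes an integer polynomial
   of degree 10 in the eight offsets whose coefficients are all nonnegative,
   with constant term 7236.  The expansion is done by a verified normaliser for
   polynomial expressions, run with [vm_compute]. *)

From Stdlib Require Import ZArith.
From mathcomp Require Import all_boot all_order all_algebra.
From mathcomp Require Import ssrZ zify ring lra.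
Set Implicit Arguments. Unset Strict Implicit. Unset Printing Implicit Defensive.
Import Order.TTheory GRing.Theory Num.Theory.
Local Open Scope ring_scope.

Inductive pexpr : Type :=
  | PVar of nat
  | PConst of nat
  | PAdd of pexpr & pexpr
  | PSub of pexpr & pexpr
  | PMul of pexpr & pexpr.

Declare Scope pexpr_scope.
Delimit Scope pexpr_scope with P.
Bind Scope pexpr_scope with pexpr.
Notation "a + b" := (PAdd a b) : pexpr_scope.
Notation "a - b" := (PSub a b) : pexpr_scope.
Notation "a * b" := (PMul a b) : pexpr_scope.

Definition pexpr_of_uint (u : Number.uint) : pexpr := PConst (Nat.of_num_uint u).
Definition uint_of_pexpr (e : pexpr) : option Number.uint :=
  if e is PConst c then Some (Nat.to_num_uint c) else None.
Number Notation pexpr pexpr_of_uint uint_of_pexpr : pexpr_scope.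

Fixpoint psubst (sigma : seq pexpr) (e : pexpr) : pexpr :=
  match e with
  | PVar j => nth 0%P sigma j
  | PConst c => PConst c
  | PAdd a b => psubst sigma a + psubst sigma b
  | PSub a b => psubst sigma a - psubst sigma b
  | PMul a b => psubst sigma a * psubst sigma b
  end.

(* A monomial is its list of exponents.  Sums are kept sorted by [mlt] so that
   [padd] merges like terms; soundness does not depend on the order. *)
Definition spoly := seq (seq nat * Z).

Fixpoint madd (m1 m2 : seq nat) : seq nat :=
  match m1, m2 with
  | e1 :: m1', e2 :: m2' => (e1 + e2)%N :: madd m1' m2'
  | [::], _ => m2
  | _, [::] => m1
  end.

Fixpoint mlt (m1 m2 : seq nat) : bool :=
  match m1, m2 with
  | e1 :: m1', e2 :: m2' => (e1 < e2)%N || (e1 == e2) && mlt m1' m2'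
  | [::], _ :: _ => true
  | _, _ => false
  end.

Fixpoint padd (p q : spoly) {struct p} : spoly :=
  match p with
  | [::] => q
  | (m1, c1) :: p' =>
    let fix padd_p (q : spoly) : spoly :=
      match q with
      | [::] => p
      | (m2, c2) :: q' =>
        if m1 == m2 then (m1, c1 + c2) :: padd p' q'
        else if mlt m1 m2 then (m1, c1) :: padd p' q
        else (m2, c2) :: padd_p q'
      end in
    padd_p q
  end.

Definition pscale (m : seq nat) (c : Z) (q : spoly) : spoly :=
  [seq (madd m mc.1, c * mc.2) | mc <- q].

Definition popp (q : spoly) : spoly := [seq (mc.1, - mc.2) | mc <- q].

Definition pmul (p q : spoly) : spoly :=
  foldr (fun mc acc => padd (pscale mc.1 mc.2 q) acc) [::] p.

Fixpoint pexpr_norm (e : pexpr) : spoly :=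
  match e with
  | PVar j => [:: (rcons (nseq j 0%N) 1%N, 1)]
  | PConst c => [:: ([::], Z.of_nat c)]
  | PAdd a b => padd (pexpr_norm a) (pexpr_norm b)
  | PSub a b => padd (pexpr_norm a) (popp (pexpr_norm b))
  | PMul a b => pmul (pexpr_norm a) (pexpr_norm b)
  end.

Definition nonneg_coeffs (p : spoly) : bool := all (fun mc => 0 <= mc.2) p.

Section Evaluation.

Variable R : numDomainType.
Implicit Types (env : seq R) (e : pexpr) (p q : spoly).

Fixpoint peval env e : R :=
  match e with
  | PVar j => env`_j
  | PConst c => c%:R
  | PAdd a b => peval env a + peval env b
  | PSub a b => peval env a - peval env b
  | PMul a b => peval env a * peval env b
  end.

Lemma peval_psubst env sigma e :
  peval env (psubst sigma e) = peval [seq peval env x | x <- sigma] e.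
Proof.
elim: e => [j|c|a IHa b IHb|a IHa b IHb|a IHa b IHb] /=; rewrite ?IHa ?IHb //.
have [lt_j|le_j] := ltnP j (size sigma); first by rewrite (nth_map 0%P).
by rewrite !nth_default ?size_map.
Qed.

Definition zintr (c : Z) : R := (int_of_Z c)%:~R.

Lemma zintrD c1 c2 : zintr (c1 + c2) = zintr c1 + zintr c2.
Proof. by rewrite /zintr raddfD intrD. Qed.

Lemma zintrM c1 c2 : zintr (c1 * c2) = zintr c1 * zintr c2.
Proof. by rewrite /zintr rmorphM intrM. Qed.

Lemma zintrN c : zintr (- c) = - zintr c.
Proof. by rewrite /zintr raddfN mulrNz. Qed.

Lemma zintr_nat c : zintr (Z.of_nat c) = c%:R.
Proof. by rewrite /zintr -[Z.of_nat c]/(Z_of_int c) Z_of_intK. Qed.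

Lemma zintr_ge0 c : 0 <= c -> 0 <= zintr c.
Proof. by case: c => // p _; rewrite /zintr ler0z. Qed.

Fixpoint meval env (m : seq nat) : R :=
  if m is e :: m' then env`_0 ^+ e * meval (behead env) m' else 1.

Lemma meval_madd env m1 m2 : meval env (madd m1 m2) = meval env m1 * meval env m2.
Proof.
elim: m1 env m2 => [|e1 m1 IH] env [|e2 m2] /=; rewrite ?mul1r ?mulr1 //.
by rewrite IH exprD mulrACA.
Qed.

Lemma meval_var env j : meval env (rcons (nseq j 0%N) 1%N) = env`_j.
Proof.
elim: j env => [|j IH] env /=; first by rewrite expr1 mulr1.
by rewrite expr0 mul1r IH nth_behead.
Qed.

Lemma meval_ge0 env m : all (fun x => 0 <= x) env -> 0 <= meval env m.
Proof.
elim: m env => [|e m IH] env henv /=; first exact: ler01.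
have [hx hb] : 0 <= env`_0 /\ all (fun x => 0 <= x) (behead env).
  by case: env henv => [|x env] //= /andP[].
by rewrite mulr_ge0 ?exprn_ge0 ?IH.
Qed.

Definition speval env p : R := \sum_(mc <- p) zintr mc.2 * meval env mc.1.

Lemma speval_padd env p q : speval env (padd p q) = speval env p + speval env q.
Proof.
rewrite /speval; elim: p q => [|[m1 c1] p IHp] q; first by rewrite big_nil add0r.
elim: q => [|[m2 c2] q IHq] /=; first by rewrite big_nil addr0.
case: eqP => [<-|_]; last case: ifP => _; rewrite !big_cons /=.
- by rewrite IHp zintrD mulrDl addrACA.
- by rewrite IHp big_cons addrA.
- by rewrite IHq big_cons addrCA.
Qed.

Lemma speval_pscale env m c q :
  speval env (pscale m c q) = zintr c * meval env m * speval env q.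
Proof.
rewrite /speval big_map mulr_sumr; apply: eq_bigr => mc _.
by rewrite zintrM meval_madd mulrACA.
Qed.

Lemma speval_popp env q : speval env (popp q) = - speval env q.
Proof.
by rewrite /speval big_map -sumrN; apply: eq_bigr => mc _; rewrite zintrN mulNr.
Qed.

Lemma speval_pmul env p q : speval env (pmul p q) = speval env p * speval env q.
Proof.
elim: p => [|[m c] p IHp] /=; first by rewrite /speval big_nil mul0r.
by rewrite speval_padd speval_pscale IHp /speval big_cons mulrDl.
Qed.

Lemma speval_norm env e : speval env (pexpr_norm e) = peval env e.
Proof.
elim: e => [j|c|a IHa b IHb|a IHa b IHb|a IHa b IHb] /=.
- by rewrite /speval big_seq1 meval_var mul1r.
- by rewrite /speval big_seq1 zintr_nat mulr1.
- by rewrite speval_padd IHa IHb.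
- by rewrite speval_padd speval_popp IHa IHb.
- by rewrite speval_pmul IHa IHb.
Qed.

Lemma speval_ge0 env p :
  all (fun x => 0 <= x) env -> nonneg_coeffs p -> 0 <= speval env p.
Proof.
move=> henv /allP hp; rewrite /speval big_seq; apply: sumr_ge0 => mc /hp hc.
by rewrite mulr_ge0 ?zintr_ge0 ?meval_ge0.
Qed.

Lemma peval_psubst_ge0 sigma e env :
  nonneg_coeffs (pexpr_norm (psubst sigma e)) -> all (fun x => 0 <= x) env ->
  0 <= peval [seq peval env x | x <- sigma] e.
Proof. by move=> he henv; rewrite -peval_psubst -speval_norm speval_ge0. Qed.

End Evaluation.

Definition admissible (n m k l s t i : nat) : bool :=
  [&& 3 <= t, t + 2 <= i, i <= k, i + 2 <= s, s <= i + k - t,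
      t < l, l <= k & (t + 1) * (k - t + 1) <= minn m n]%N.

(* [e1] is shared by [i] and [s] so that both upper bounds on [k],
   [i <= k] and [s - i + t <= k], hold by construction. *)
Definition admissible_param : seq pexpr :=
  (let a := PVar 0 in let b := PVar 1 in let e1 := PVar 2 in let e2 := PVar 3 in
   let c := PVar 4 in let r := PVar 5 in let f := PVar 6 in let g := PVar 7 in
   let t := a + 3 in let i := t + 2 + b + e1 in let s := i + 2 + e1 + e2 in
   let k := i + c + e2 in let M := (t + 1) * (k - t + 1) in
   [:: M + f; M + g; k; k - r; s; t; i])%P.

Lemma admissible_paramP n m k l s t i : admissible n m k l s t i ->
  exists env : seq nat, [:: n%:Q; m%:Q; k%:Q; l%:Q; s%:Q; t%:Q; i%:Q] =
    [seq peval [seq x%:Q | x : nat <- env] x | x <- admissible_param].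
Proof.
case/and5P => t3 ti ik si /and4P[si' tl lk]; rewrite leq_min => /andP[hm hn].
have [a def_t] : exists a, t = (a + 3)%N by exists (t - 3)%N; lia.
have [b [e1 [e2 [c [def_i def_s def_k]]]]] : exists b e1 e2 c,
    [/\ i = (t + 2 + b + e1)%N, s = (i + 2 + e1 + e2)%N & k = (i + c + e2)%N].
  pose e1 := minn (s - i - 2) (i - t - 2).
  exists (i - t - 2 - e1)%N, e1, (s - i - 2 - e1)%N, (k - i - (s - i - 2 - e1))%N.
  split; lia.
have [r def_l] : exists r, k = (l + r)%N by exists (k - l)%N; lia.
have hkt : (k - t = b + e1 + c + e2 + 2)%N by lia.
have [f def_n] : exists f, n = ((t + 1) * (b + e1 + c + e2 + 2 + 1) + f)%N.
  by exists (n - (t + 1) * (k - t + 1))%N; rewrite -hkt subnKC.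
have [g def_m] : exists g, m = ((t + 1) * (b + e1 + c + e2 + 2 + 1) + g)%N.
  by exists (m - (t + 1) * (k - t + 1))%N; rewrite -hkt subnKC.
exists [:: a; b; e1; e2; c; r; f; g].
have -> : l%:Q = k%:Q - r%:Q by rewrite def_l PoszD intrD addrK.
rewrite def_n def_m def_k def_s def_i def_t /=.
congr [:: _; _; _; _; _; _; _]; ring.
Qed.

Lemma admissible_ge0 n m k l s t i e : admissible n m k l s t i ->
  nonneg_coeffs (pexpr_norm (psubst admissible_param e)) ->
  0 <= peval [:: n%:Q; m%:Q; k%:Q; l%:Q; s%:Q; t%:Q; i%:Q] e.
Proof.
case/admissible_paramP => env -> he; apply: peval_psubst_ge0 he _.
by apply/allP => _ /mapP[x _ ->]; rewrite ler0z.
Qed.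

Lemma admissible_gt0 n m k l s t i e : admissible n m k l s t i ->
  nonneg_coeffs (pexpr_norm (psubst admissible_param (e - 1))) ->
  0 < peval [:: n%:Q; m%:Q; k%:Q; l%:Q; s%:Q; t%:Q; i%:Q] e.
Proof.
by move=> hA /(admissible_ge0 hA) /=; rewrite subr_ge0; apply: lt_le_trans.
Qed.

Local Notation vn := (PVar 0).
Local Notation vm := (PVar 1).
Local Notation vk := (PVar 2).
Local Notation vl := (PVar 3).
Local Notation vs := (PVar 4).
Local Notation vt := (PVar 5).
Local Notation vi := (PVar 6).

Definition Sp (n s i j : pexpr) : pexpr := (s * (n - s + 1) - i * (j - i))%P.
Definition Tp (n s i j : pexpr) : pexpr :=
  (i * (n - j - s + i + 1) + (s - i) * (j - i + 1))%P.

Lemma admissible_jE n m k l s t i : admissible n m k l s t i ->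
  (s + t - i)%N%:Q = s%:Q + t%:Q - i%:Q.
Proof.
case/and5P => _ _ _ si _; rewrite -subzn ?intrB ?PoszD ?intrD //; lia.
Qed.

Lemma denominator_linear_gt0 n m k l s t i : admissible n m k l s t i ->
  0 < n%:Q - s%:Q + 1 /\ 0 < m%:Q - s%:Q + 1.
Proof.
move=> hA; split.
- by move/(admissible_gt0 (e := vn - vs + 1)): hA; apply; vm_compute.
- by move/(admissible_gt0 (e := vm - vs + 1)): hA; apply; vm_compute.
Qed.

Lemma Tf_first_gt0 n m k l s t i : admissible n m k l s t i -> 0 < Tf n s i k.
Proof. by move/(admissible_gt0 (e := Tp vn vs vi vk)); apply; vm_compute. Qed.

Lemma Tf_second_gt0 n m k l s t i : admissible n m k l s t i ->
  0 < Tf m s (s + t - i) l.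
Proof.
move=> hA; case/and5P: (hA) => _ ti _ _ /and4P[_ tl _ _].
have hcorr : 0 <= (i%:Q - t%:Q - 2) * (l%:Q - t%:Q - 1).
  have ti' : (t + 2)%:Q <= i%:Q by rewrite ler_int lez_nat.
  have tl' : (t + 1)%:Q <= l%:Q by rewrite ler_int lez_nat; lia.
  rewrite PoszD intrD in ti' tl'.
  by apply: mulr_ge0; lra.
(* After the substitution [Tf m s j l] has the single negative term [- b * r];
   subtracting [(i - t - 2) * (l - t - 1)], which is [>= 0], removes it. *)
have := admissible_gt0
  (e := (Tp vm vs (vs + vt - vi) vl - (vi - vt - 2) * (vl - vt - 1))%P) hA.
by rewrite /Tf (admissible_jE hA) /= => hT; lra.
Qed.

Definition gap_expr : pexpr :=
  (let j := vs + vt - vi in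
   (vm - vl + vt - vi) * (vn - vs - vk + vi) * Sp vn vs vi vk * Sp vm vs j vl
   - (vm - vs + 1) * (vn - vs + 1) * Tp vn vs vi vk * Tp vm vs j vl)%P.

Lemma gap_gt0 n m k l s t i : admissible n m k l s t i ->
  0 < (m%:Q - l%:Q + t%:Q - i%:Q) * (n%:Q - s%:Q - k%:Q + i%:Q)
        * Sf n s i k * Sf m s (s + t - i) l
      - (m%:Q - s%:Q + 1) * (n%:Q - s%:Q + 1)
        * Tf n s i k * Tf m s (s + t - i) l.
Proof.
move=> hA; rewrite [Sf m _ _ _]/Sf [Tf m _ _ _]/Tf (admissible_jE hA).
by move/(admissible_gt0 (e := gap_expr)): hA; apply; vm_compute.
Qed.

Theorem lemma3p1 (n m k l s t i : nat) :
  (0 < n)%N -> (0 < m)%N -> (0 < k)%N -> (0 < l)%N -> (0 < s)%N ->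
  (0 < t)%N -> (0 < i)%N ->
  ((t + 1) * (k - t + 1) <= minn m n)%N ->
  (l <= k)%N -> (t < l)%N -> (3 <= t)%N ->
  (i + 2 <= s)%N -> (s <= i + k - t)%N ->
  (t + 2 <= i)%N -> (i <= k)%N ->
  1 < ((m%:Q - l%:Q + t%:Q - i%:Q) * (n%:Q - s%:Q - k%:Q + i%:Q)
         * Sf n s i k * Sf m s (s + t - i) l)
      / ((m%:Q - s%:Q + 1) * (n%:Q - s%:Q + 1)
         * Tf n s i k * Tf m s (s + t - i) l).
Proof.
move=> _ _ _ _ _ _ _ hM lk tl t3 is2 sk ti ik.
have hA : admissible n m k l s t i by rewrite /admissible t3 ti ik is2 sk tl lk hM.
have [hn hm] := denominator_linear_gt0 hA.
rewrite ltr_pdivlMr; last by rewrite !mulr_gt0 ?(Tf_first_gt0 hA) ?(Tf_second_gt0 hA).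
by rewrite mul1r -subr_gt0; apply: gap_gt0.
Qed.
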